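(* For all integers $n\ge1$ and real numbers $a\ge1$, $x,y\in(0,\pi)$: if $n$ is odd then $\Theta^*_{n,a}(x,y)\ge\sin(x)\sin(y)$, with equality if and only if $n=1$; if $n$ is even then $\Theta^*_{n,a}(x,y)\ge 2\sin(x)\sin(y)$, with equality if and only if $n=2$, $a=1$.
   Context: For a real number $a$ and integers $0\le m$, $\binom{m+a}{m}=\frac{(a+1)(a+2)\cdots(a+m)}{m!}$ (equal to $1$ when $m=0$). For an integer $n\ge1$, $\Theta^*_{n,a}(x,y)=\sum_{1\le j\le n,\ j\text{ odd}}\binom{n+a-j}{n-j}\frac{\sin(jx)\sin(jy)}{j}$. *)

From Stdlib Require Import Reals Lra Lia Factorial.
Open Scope R_scope.

(* Generalized binomial coefficient binom(m+a, m) = (a+1)(a+2)...(a+m)/m!,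
   equal to 1 when m = 0. *)
Fixpoint rising_prod (a : R) (m : nat) : R :=
  match m with
  | O => 1
  | S k => rising_prod a k * (a + INR (S k))
  end.

Definition gbinom (m : nat) (a : R) : R := rising_prod a m / INR (fact m).

Definition theta_term (n : nat) (a x y : R) (j : nat) : R :=
  if Nat.odd j then
    gbinom (n - j) a * (sin (INR j * x) * sin (INR j * y)) / INR j
  else 0.

Definition ThetaStar (n : nat) (a x y : R) : R :=
  sum_f 1 n (theta_term n a x y).

(* Abel summation rewrites Theta*_{n,a}(x,y) as sum_{m<=n} binom(n-m+a-1, n-m) S_m(x,y), where
   S_m is the m-th partial sum of the odd terms sin(jx)sin(jy)/j.  For a >= 1 every coefficient
   is >= 1, and every S_m is >= 0: S_m = (C_m(x-y) - C_m(x+y))/2 for the odd cosine sum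
   C_m(t) = sum cos(jt)/j, whose derivative -sum sin(jt) is <= 0 on [0, PI] because
   sin t * sum_{j<=m, j odd} sin(jt) is a square.  Since S_1 = S_2 = sin x sin y and S_3 > 0,
   the lower bounds follow, strictly as soon as n >= 3. *)
From Stdlib Require Import Reals Lra Lia Factorial.
From Coquelicot Require Import Coquelicot.
Open Scope R_scope.

Fixpoint psum (f : nat -> R) (n : nat) : R :=
  match n with O => 0 | S k => psum f k + f (S k) end.

Lemma psumS f n : psum f (S n) = psum f n + f (S n).
Proof. reflexivity. Qed.

Lemma eq_psum f g n :
  (forall j, (1 <= j <= n)%nat -> f j = g j) -> psum f n = psum g n.
Proof.
  induction n as [|n IH]; intros Hfg; [reflexivity|].
  rewrite !psumS, (IH (fun j Hj => Hfg j ltac:(lia))), (Hfg (S n)) by lia. reflexivity.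
Qed.

Lemma sum_f_psum f n : (1 <= n)%nat -> sum_f 1 n f = psum f n.
Proof.
  intros Hn. unfold sum_f.
  replace (n - 1)%nat with (Nat.pred n) by lia.
  destruct n as [|n]; [lia|]. simpl Nat.pred.
  induction n as [|n IH]; [simpl; ring|].
  rewrite psumS, <- IH by lia. simpl sum_f_R0. f_equal. f_equal. lia.
Qed.

Lemma psum_le f k n :
  (k <= n)%nat -> (forall j, (k < j <= n)%nat -> 0 <= f j) -> psum f k <= psum f n.
Proof.
  intros Hkn Hf. induction n as [|n IH].
  - replace k with 0%nat by lia. lra.
  - destruct (Nat.eq_dec k (S n)) as [->|Hk]; [lra|].
    rewrite psumS. assert (0 <= f (S n)) by (apply Hf; lia).
    assert (psum f k <= psum f n) by (apply IH; [lia | intros; apply Hf; lia]). lra.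
Qed.

Definition bdiff (c : nat -> R) (k : nat) : R :=
  match k with O => c O | S k' => c (S k') - c k' end.

Lemma psum_abel n (c t : nat -> R) :
  psum (fun j => c (n - j)%nat * t j) n = psum (fun m => bdiff c (n - m) * psum t m) n.
Proof.
  revert c. induction n as [|[|n] IH]; intros c; [reflexivity | simpl; ring |].
  rewrite psumS, (eq_psum _ (fun j => c (S (S n - j)) * t j))
    by (intros j Hj; do 2 f_equal; lia).
  rewrite (IH (fun k => c (S k))), !psumS.
  rewrite (eq_psum (fun m => bdiff (fun k => c (S k)) (S n - m) * psum t m)
                   (fun m => bdiff c (S (S n) - m) * psum t m)).
  2:{ intros j Hj. replace (S n - j)%nat with (S (n - j)) by lia.
      replace (S (S n) - j)%nat with (S (S (n - j))) by lia. reflexivity. }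
  rewrite !Nat.sub_diag.
  replace (S (S n) - S n)%nat with 1%nat by lia. cbn [bdiff]. ring.
Qed.

Lemma rising_prodS a k : rising_prod a (S k) = rising_prod a k * (a + INR (S k)).
Proof. reflexivity. Qed.

Lemma rising_prod_pred a k : rising_prod (a - 1) (S k) = a * rising_prod a k.
Proof.
  induction k as [|k IH]; [simpl; ring|].
  rewrite rising_prodS, IH, rising_prodS, (S_INR (S k)). ring.
Qed.

Lemma gbinom0 a : gbinom 0 a = 1.
Proof. unfold gbinom. simpl. field. Qed.

Lemma gbinom1 a : gbinom 1 a = a + 1.
Proof. unfold gbinom. simpl. field. Qed.

Lemma gbinom_pascal a k : gbinom (S k) a - gbinom k a = gbinom (S k) (a - 1).
Proof.
  unfold gbinom. rewrite rising_prod_pred, fact_simpl, mult_INR, rising_prodS.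
  assert (INR (fact k) <> 0) by apply INR_fact_neq_0.
  assert (INR (S k) <> 0) by (apply not_0_INR; lia).
  field. split; assumption.
Qed.

Lemma bdiff_gbinom a k : bdiff (fun k => gbinom k a) k = gbinom k (a - 1).
Proof. destruct k as [|k]; [cbn [bdiff]; rewrite !gbinom0; reflexivity | apply gbinom_pascal]. Qed.

Lemma fact_le_rising_prod b m : 0 <= b -> INR (fact m) <= rising_prod b m.
Proof.
  intros Hb. induction m as [|m IH]; [simpl; lra|].
  rewrite fact_simpl, mult_INR, rising_prodS.
  assert (0 < INR (fact m)) by (apply lt_0_INR, lt_O_fact).
  assert (0 <= INR (S m)) by apply pos_INR. nra.
Qed.

Lemma gbinom_ge1 b m : 0 <= b -> 1 <= gbinom m b.
Proof.
  intros Hb. unfold gbinom. assert (0 < INR (fact m)) by (apply lt_0_INR, lt_O_fact).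
  pose proof (fact_le_rising_prod b m Hb).
  apply Rmult_le_reg_r with (INR (fact m)); [lra|].
  unfold Rdiv. rewrite Rmult_assoc, Rinv_l by lra. lra.
Qed.

Definition odd_part (f : nat -> R) (j : nat) : R := if Nat.odd j then f j else 0.

Definition odd_sin_sum (t : R) : nat -> R := psum (odd_part (fun j => sin (INR j * t))).
Definition odd_cos_sum (t : R) : nat -> R := psum (odd_part (fun j => cos (INR j * t) / INR j)).
Definition odd_sinsin_sum (x y : R) : nat -> R :=
  psum (odd_part (fun j => sin (INR j * x) * sin (INR j * y) / INR j)).

Lemma odd_double k : Nat.odd (k + k) = false.
Proof. rewrite Nat.odd_add. destruct (Nat.odd k); reflexivity. Qed.

Lemma sin_sq_sub A B : sin A ^ 2 - sin B ^ 2 = sin (A + B) * sin (A - B).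
Proof.
  rewrite sin_plus, sin_minus.
  pose proof (sin2_cos2 A). pose proof (sin2_cos2 B). unfold Rsqr in *. nra.
Qed.

(* Telescoping: sin t * sin((2k+1)t) = sin((k+1)t)^2 - sin(kt)^2. *)
Lemma sin_mul_odd_sin_sum k t :
  sin t * odd_sin_sum t (k + k) = sin (INR k * t) ^ 2 /\
  sin t * odd_sin_sum t (S (k + k)) = sin (INR (S k) * t) ^ 2.
Proof.
  unfold odd_sin_sum.
  induction k as [|k [_ IHodd]]; [unfold odd_part; simpl; rewrite Rmult_0_l, Rmult_1_l, sin_0; split; ring|].
  assert (Heven : sin t * psum (odd_part (fun j => sin (INR j * t))) (S k + S k)
                  = sin (INR (S k) * t) ^ 2).
  { replace (S k + S k)%nat with (S (S (k + k))) by lia.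
    rewrite psumS. unfold odd_part at 2.
    replace (S (S (k + k))) with (S k + S k)%nat by lia. rewrite odd_double, Rplus_0_r.
    exact IHodd. }
  split; [exact Heven|].
  rewrite psumS, Rmult_plus_distr_l, Heven. unfold odd_part.
  replace (Nat.odd (S (S k + S k))) with true
    by (replace (S (S k + S k)) with (1 + (S k + S k))%nat by lia;
        rewrite Nat.odd_add, odd_double; reflexivity).
  pose proof (sin_sq_sub (INR (S (S k)) * t) (INR (S k) * t)) as Hsq.
  replace (INR (S (S k)) * t + INR (S k) * t) with (INR (S (S k + S k)) * t) in Hsq
    by (rewrite !S_INR, plus_INR, !S_INR; ring).
  replace (INR (S (S k)) * t - INR (S k) * t) with t in Hsq by (rewrite !S_INR; ring).
  lra.
Qed.

Lemma odd_sin_sum_ge0 m t : 0 < t < PI -> 0 <= odd_sin_sum t m.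
Proof.
  intros Ht. pose proof (sin_gt_0 t (proj1 Ht) (proj2 Ht)).
  destruct (Nat.Even_or_Odd m) as [[k Hk]|[k Hk]].
  - replace m with (k + k)%nat by lia. destruct (sin_mul_odd_sin_sum k t) as [Hs _].
    pose proof (pow2_ge_0 (sin (INR k * t))). nra.
  - replace m with (S (k + k)) by lia. destruct (sin_mul_odd_sin_sum k t) as [_ Hs].
    pose proof (pow2_ge_0 (sin (INR (S k) * t))). nra.
Qed.

Lemma is_derive_odd_cos_sum m t : is_derive (fun t => odd_cos_sum t m) t (- odd_sin_sum t m).
Proof.
  unfold odd_cos_sum, odd_sin_sum.
  induction m as [|m IH]; simpl psum.
  - replace (- 0) with 0 by ring. apply is_derive_Reals, derivable_pt_lim_const.
  - rewrite Ropp_plus_distr. apply (is_derive_plus _ (fun t => odd_part _ (S m))); [exact IH|].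
    unfold odd_part. destruct (Nat.odd (S m)).
    + assert (Hj : INR (S m) <> 0) by (apply not_0_INR; lia).
      set (r := INR (S m)) in *. clearbody r.
      auto_derive; [exact I|]. field. exact Hj.
    + replace (- 0) with 0 by ring. apply is_derive_Reals, derivable_pt_lim_const.
Qed.

Lemma odd_cos_sum_decreasing m u v :
  0 <= u -> u <= v -> v <= PI -> odd_cos_sum v m <= odd_cos_sum u m.
Proof.
  intros Hu Huv Hv. destruct (Req_dec u v) as [->|Hne]; [lra|].
  destruct (MVT_cor2 (fun t => odd_cos_sum t m) (fun t => - odd_sin_sum t m) u v)
    as [c [Hdiff Hc]]; [lra | intros; apply is_derive_Reals, is_derive_odd_cos_sum |].
  assert (0 <= odd_sin_sum c m) by (apply odd_sin_sum_ge0; lra). nra.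
Qed.

Lemma odd_cos_sum_opp m t : odd_cos_sum (- t) m = odd_cos_sum t m.
Proof.
  apply eq_psum. intros j _. unfold odd_part.
  replace (INR j * - t) with (- (INR j * t)) by ring. rewrite cos_neg. reflexivity.
Qed.

Lemma odd_cos_sum_2PI_sub m t : odd_cos_sum (2 * PI - t) m = odd_cos_sum t m.
Proof.
  apply eq_psum. intros j _. unfold odd_part.
  replace (INR j * (2 * PI - t)) with (- (INR j * t) + 2 * INR j * PI) by ring.
  rewrite cos_period, cos_neg. reflexivity.
Qed.

Lemma odd_cos_sum_le m u v :
  0 <= u -> u <= v -> u <= 2 * PI - v -> odd_cos_sum v m <= odd_cos_sum u m.
Proof.
  intros Hu Huv Hu'. destruct (Rle_dec v PI).
  - apply odd_cos_sum_decreasing; lra.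
  - rewrite <- odd_cos_sum_2PI_sub. apply odd_cos_sum_decreasing; lra.
Qed.

Lemma odd_sinsin_sum_cos m x y :
  odd_sinsin_sum x y m = (odd_cos_sum (x - y) m - odd_cos_sum (x + y) m) / 2.
Proof.
  unfold odd_sinsin_sum, odd_cos_sum.
  induction m as [|m IH]; simpl psum; [field|]. rewrite IH.
  unfold odd_part. destruct (Nat.odd (S m)); [|field].
  assert (INR (S m) <> 0) by (apply not_0_INR; lia).
  rewrite !Rmult_minus_distr_l, !Rmult_plus_distr_l, cos_minus, cos_plus. field. assumption.
Qed.

Lemma odd_sinsin_sum_ge0 m x y : 0 < x < PI -> 0 < y < PI -> 0 <= odd_sinsin_sum x y m.
Proof.
  intros Hx Hy. rewrite odd_sinsin_sum_cos.
  assert (Habs : odd_cos_sum (x - y) m = odd_cos_sum (Rabs (x - y)) m).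
  { unfold Rabs. destruct (Rcase_abs (x - y)); [rewrite odd_cos_sum_opp|]; reflexivity. }
  assert (odd_cos_sum (x + y) m <= odd_cos_sum (Rabs (x - y)) m).
  { apply odd_cos_sum_le; [apply Rabs_pos | |];
      unfold Rabs; destruct (Rcase_abs (x - y)); lra. }
  lra.
Qed.

Lemma sin_3x t : sin (3 * t) = sin t * (3 - 4 * sin t ^ 2).
Proof.
  replace (3 * t) with (2 * t + t) by ring.
  assert (Hcos2 : cos t * cos t = 1 - sin t * sin t)
    by (pose proof (sin2_cos2 t); unfold Rsqr in *; lra).
  rewrite sin_plus, sin_2a, cos_2a_sin.
  replace (2 * sin t * cos t * cos t) with (2 * sin t * (cos t * cos t)) by ring.
  rewrite Hcos2. unfold Rsqr. ring.
Qed.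

Lemma odd_sinsin_sum_1 x y : odd_sinsin_sum x y 1 = sin x * sin y.
Proof. unfold odd_sinsin_sum, odd_part. simpl. rewrite !Rmult_1_l. field. Qed.

Lemma odd_sinsin_sum_2 x y : odd_sinsin_sum x y 2 = sin x * sin y.
Proof. rewrite <- (odd_sinsin_sum_1 x y). unfold odd_sinsin_sum, odd_part. simpl. ring. Qed.

(* With p = 3 - 4 sin^2 x and q = 3 - 4 sin^2 y in [-1, 3]: S_3 = sin x sin y (1 + p q / 3). *)
Lemma odd_sinsin_sum_3_gt0 x y : 0 < x < PI -> 0 < y < PI -> 0 < odd_sinsin_sum x y 3.
Proof.
  intros Hx Hy. unfold odd_sinsin_sum. rewrite psumS. fold (odd_sinsin_sum x y 2).
  rewrite odd_sinsin_sum_2. unfold odd_part. change (Nat.odd 3) with true.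
  replace (INR 3) with 3 by (simpl; ring). rewrite !sin_3x.
  pose proof (sin_gt_0 x (proj1 Hx) (proj2 Hx)).
  pose proof (sin_gt_0 y (proj1 Hy) (proj2 Hy)).
  pose proof (SIN_bound x). pose proof (SIN_bound y).
  set (p := 3 - 4 * sin x ^ 2). set (q := 3 - 4 * sin y ^ 2).
  assert (-1 <= p < 3) by (unfold p; nra).
  assert (-1 <= q < 3) by (unfold q; nra).
  assert (-3 < p * q) by (destruct (Rle_dec 0 p), (Rle_dec 0 q); nra).
  replace (sin x * sin y + sin x * p * (sin y * q) / 3)
    with (sin x * sin y * (1 + p * q / 3)) by field.
  apply Rmult_lt_0_compat; nra.
Qed.

Lemma ThetaStar_abel n a x y : (1 <= n)%nat ->
  ThetaStar n a x y = psum (fun m => gbinom (n - m) (a - 1) * odd_sinsin_sum x y m) n.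
Proof.
  intros Hn. unfold ThetaStar. rewrite sum_f_psum by exact Hn.
  rewrite (eq_psum _ (fun j => gbinom (n - j) a *
             odd_part (fun j => sin (INR j * x) * sin (INR j * y) / INR j) j)).
  2:{ intros j _. unfold theta_term, odd_part. destruct (Nat.odd j); unfold Rdiv; ring. }
  rewrite (psum_abel n (fun k => gbinom k a)).
  apply eq_psum. intros m _. rewrite bdiff_gbinom. reflexivity.
Qed.

Lemma ThetaStar_1 a x y : ThetaStar 1 a x y = sin x * sin y.
Proof. rewrite ThetaStar_abel by lia. simpl psum. rewrite gbinom0, odd_sinsin_sum_1. ring. Qed.

Lemma ThetaStar_2 a x y : ThetaStar 2 a x y = (a + 1) * (sin x * sin y).
Proof.
  rewrite ThetaStar_abel by lia. simpl psum.
  rewrite gbinom1, gbinom0, odd_sinsin_sum_2, odd_sinsin_sum_1. ring.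
Qed.

Lemma ThetaStar_gt n a x y : (3 <= n)%nat -> 1 <= a -> 0 < x < PI -> 0 < y < PI ->
  2 * (sin x * sin y) < ThetaStar n a x y.
Proof.
  intros Hn Ha Hx Hy. rewrite ThetaStar_abel by lia.
  set (g := fun m => gbinom (n - m) (a - 1) * odd_sinsin_sum x y m).
  assert (Hcoef : forall k, 1 <= gbinom k (a - 1)) by (intros; apply gbinom_ge1; lra).
  assert (Hhead : psum g 3 <= psum g n).
  { apply psum_le; [exact Hn|]. intros j _. unfold g.
    pose proof (Hcoef (n - j)%nat). pose proof (odd_sinsin_sum_ge0 j x y Hx Hy). nra. }
  assert (2 * (sin x * sin y) < psum g 3).
  { unfold g. simpl psum. rewrite odd_sinsin_sum_1, odd_sinsin_sum_2.
    assert (0 < sin x * sin y) by (apply Rmult_lt_0_compat; apply sin_gt_0; lra).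
    pose proof (odd_sinsin_sum_3_gt0 x y Hx Hy).
    pose proof (Hcoef (n - 1)%nat). pose proof (Hcoef (n - 2)%nat).
    pose proof (Hcoef (n - 3)%nat). nra. }
  lra.
Qed.

Theorem theorem3p9 (n : nat) (a x y : R) :
  (1 <= n)%nat -> 1 <= a -> 0 < x < PI -> 0 < y < PI ->
  (Nat.odd n = true ->
     ThetaStar n a x y >= sin x * sin y /\
     (ThetaStar n a x y = sin x * sin y <-> n = 1%nat)) /\
  (Nat.even n = true ->
     ThetaStar n a x y >= 2 * sin x * sin y /\
     (ThetaStar n a x y = 2 * sin x * sin y <-> (n = 2%nat /\ a = 1))).
Proof.
  intros Hn Ha Hx Hy.
  assert (Hs : 0 < sin x * sin y) by (apply Rmult_lt_0_compat; apply sin_gt_0; lra).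
  destruct n as [|[|[|n]]]; [lia | | |]; split; intros Hpar; try discriminate Hpar.
  - rewrite ThetaStar_1. split; [lra | split; [reflexivity | lra]].
  - rewrite ThetaStar_2. split; [nra|].
    split; [intros Heq; split; [reflexivity | nra] | intros [_ ->]; ring].
  - pose proof (ThetaStar_gt (S (S (S n))) a x y ltac:(lia) Ha Hx Hy).
    split; [lra | split; [lra | lia]].
  - pose proof (ThetaStar_gt (S (S (S n))) a x y ltac:(lia) Ha Hx Hy).
    split; [lra | split; [lra | intros [? _]; lia]].
Qed.
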